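(* Let $k$ be a field of characteristic $\neq 2$, let $\mathcal O$ be the Lie algebra described in the context, and let $J=q(t)k[t]$ be a nonzero ideal of $k[t]$; put $w_i=v_iq(t)$, $i=0,1,2$. Then the ideals $\mathcal I$ of $\mathcal O$ with $J_{\mathcal I}=J$ are exactly the subspaces $\mathcal I=\mathcal O Jt(t-1)\oplus\mathcal S$ where $\mathcal S$ is of one of the following types: (i) $\mathcal S=k\epsilon(w_0t+w_1t)\oplus k\delta(w_0t-w_1t)\oplus k\epsilon\delta\gamma\, w_2t\oplus k\epsilon'(w_0(t-1)+w_2(t-1))\oplus k\delta'(w_0(t-1)-w_2(t-1))\oplus k\epsilon'\delta'\gamma'\, w_1(t-1)$, where $\epsilon,\delta,\gamma,\epsilon',\delta',\gamma'\in\{0,1\}$ with $\epsilon+\delta\neq0\neq\epsilon'+\delta'$; (ii) $\mathcal S=\mathcal S_\eta=\mathrm{span}\{w_0t,\ w_1t,\ w_0(t-1),\ w_2(t-1),\ w_2t+\eta w_1(t-1)\}$ with $0\neq\eta\in k$.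
   Context: $\mathcal O$ is the Lie algebra over $k$ which is a free $k[t]$-module with basis $v_0,v_1,v_2$, with $k[t]$-bilinear bracket determined by $[v_0,v_1]=-v_2(t-1)$, $[v_1,v_2]=-v_0$, $[v_2,v_0]=v_1t$ (it is isomorphic to the Onsager algebra). For an ideal $\mathcal I$ of $\mathcal O$, $J_{\mathcal I}=\{p(t)\in k[t]: v_0p(t)+v_1p_1(t)+v_2p_2(t)\in\mathcal I\text{ for some }p_1,p_2\in k[t]\}$. For an ideal $J$ of $k[t]$, $\mathcal OJ=v_0J\oplus v_1J\oplus v_2J$, and $\mathcal OJt(t-1)=\mathcal O\,(Jt(t-1))$. *)

From HB Require Import structures.
From mathcomp Require Import all_boot all_order all_algebra.
Set Implicit Arguments. Unset Strict Implicit. Unset Printing Implicit Defensive.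
Import Order.TTheory GRing.Theory Num.Theory.
Local Open Scope ring_scope.

Section Onsager.
Variable K : fieldType.

(* An element of O = v0 k[t] (+) v1 k[t] (+) v2 k[t]: its three coordinates. *)
Record Oelt := mkO { c0 : {poly K}; c1 : {poly K}; c2 : {poly K} }.

Definition zeroO : Oelt := mkO 0 0 0.
Definition addO (x y : Oelt) : Oelt :=
  mkO (c0 x + c0 y) (c1 x + c1 y) (c2 x + c2 y).
Definition pmulO (p : {poly K}) (x : Oelt) : Oelt :=
  mkO (p * c0 x) (p * c1 x) (p * c2 x).
Definition scaleO (a : K) (x : Oelt) : Oelt := pmulO a%:P x.
Definition subO (x y : Oelt) : Oelt := addO x (scaleO (-1) y).

(* The k[t]-bilinear bracket determined by
   [v0,v1] = -v2(t-1), [v1,v2] = -v0, [v2,v0] = v1 t. *)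
Definition brO (x y : Oelt) : Oelt :=
  mkO (- (c1 x * c2 y - c2 x * c1 y))
      ('X * (c2 x * c0 y - c0 x * c2 y))
      (- (('X - 1) * (c0 x * c1 y - c1 x * c0 y))).

Definition v0 : Oelt := mkO 1 0 0.
Definition v1 : Oelt := mkO 0 1 0.
Definition v2 : Oelt := mkO 0 0 1.

Definition is_ideal (I : Oelt -> Prop) : Prop :=
  [/\ I zeroO,
      (forall x y, I x -> I y -> I (addO x y)),
      (forall (a : K) x, I x -> I (scaleO a x)) &
      (forall x y, I y -> I (brO x y))].

Definition J_of (I : Oelt -> Prop) (p : {poly K}) : Prop :=
  exists p1 p2 : {poly K}, I (mkO p p1 p2).

(* O J t(t-1) for J = q k[t]:  v0 J' + v1 J' + v2 J' with J' = q t(t-1) k[t]. *)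
Definition OJtt1 (q : {poly K}) (x : Oelt) : Prop :=
  let m := q * ('X * ('X - 1)) in
  [/\ m %| c0 x, m %| c1 x & m %| c2 x].

Fixpoint spanO (l : seq Oelt) (x : Oelt) : Prop :=
  match l with
  | [::] => x = zeroO
  | v :: l' => exists (a : K) (y : Oelt), spanO l' y /\ x = addO (scaleO a v) y
  end.

Definition direct_sum_eq (A B I : Oelt -> Prop) : Prop :=
  (forall x, I x <-> exists a b, A a /\ B b /\ x = addO a b) /\
  (forall x, A x -> B x -> x = zeroO).

Definition bK (b : bool) : K := (b : nat)%:R.

Definition typeI (q : {poly K}) (S : Oelt -> Prop) : Prop :=
  let w0 := pmulO q v0 in let w1 := pmulO q v1 in let w2 := pmulO q v2 in
  let t := 'X : {poly K} in let t1 := ('X - 1) : {poly K} in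
  exists e d g e' d' g' : bool,
    [/\ e || d, e' || d' &
     forall x, S x <->
       spanO [:: scaleO (bK e) (addO (pmulO t w0) (pmulO t w1));
                 scaleO (bK d) (subO (pmulO t w0) (pmulO t w1));
                 scaleO (bK [&& e, d & g]) (pmulO t w2);
                 scaleO (bK e') (addO (pmulO t1 w0) (pmulO t1 w2));
                 scaleO (bK d') (subO (pmulO t1 w0) (pmulO t1 w2));
                 scaleO (bK [&& e', d' & g']) (pmulO t1 w1)] x].

Definition typeII (q : {poly K}) (S : Oelt -> Prop) : Prop :=
  let w0 := pmulO q v0 in let w1 := pmulO q v1 in let w2 := pmulO q v2 in
  let t := 'X : {poly K} in let t1 := ('X - 1) : {poly K} in
  exists eta : K, eta != 0 /\
    forall x, S x <->
      spanO [:: pmulO t w0; pmulO t w1; pmulO t1 w0; pmulO t1 w2;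
                addO (pmulO t w2) (scaleO eta (pmulO t1 w1))] x.

End Onsager.

(* Since q lies in J_I, bracketing with v1, v2 and with multiples of v0 puts all of
   O q t(t-1) into I; since J_I = q k[t], the same brackets show that I lies in O q.
   Hence I is determined by its image P in O q / O q t(t-1) = k^6, recorded through the
   values at t = 0 and t = 1 of the three coordinates: P is a subspace stable under the
   bracket of O/Ot x O/O(t-1) whose projection on the v0-values at 0 and 1 is onto.
   Bracketing with v1, v2 splits P along three coordinate planes: the (v0, v2)-values at
   0 and the (v0, v1)-values at 1 form swap-stable planes, hence (char k <> 2) are spanned
   by vectors (1, 1) and (1, -1); the (v1-value at 0, v2-value at 1)-plane is either
   spanned by coordinate vectors, giving type (i), or is a line off the axes, which forces
   the other two planes to be full, giving type (ii). *)

From HB Require Import structures.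
From mathcomp Require Import all_boot all_order all_algebra.
From mathcomp Require Import ring boolp.
Import GRing.Theory.
Local Open Scope ring_scope.
Set Implicit Arguments. Unset Strict Implicit.

Section PlanarSubspaces.
Variable K : fieldType.
Implicit Types (L : K -> K -> Prop) (c x y : K) (E D : Prop).

Definition subspace2 L :=
  [/\ L 0 0, (forall x y x' y', L x y -> L x' y' -> L (x + x') (y + y')) &
      forall c x y, L x y -> L (c * x) (c * y)].

Definition swap_stable L := forall x y, L x y -> L y x.

Definition full L := forall x y, L x y.

Definition swap_part E D x y := (x + y != 0 -> E) /\ (x - y != 0 -> D).

Definition axes_part E D x y := (x != 0 -> E) /\ (y != 0 -> D).

Lemma nz_imp_lin (b : bool) c c' x y z : z = c * x + c' * y ->
  (x != 0 -> b) -> (y != 0 -> b) -> z != 0 -> b.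
Proof.
move=> -> hx hy; apply: contraTT => nb.
by rewrite (eqP (negbNE (contra hx nb))) (eqP (negbNE (contra hy nb))) !mulr0 addr0 eqxx.
Qed.

Lemma swap_part_subspace2 (e d : bool) : subspace2 (swap_part e d).
Proof.
split=> [|x y x' y' [e1 d1] [e2 d2]|c x y [e1 d1]]; first by rewrite /swap_part addr0 subr0 eqxx.
- by split; [apply: (nz_imp_lin (c := 1) (c' := 1) _ e1 e2)|
             apply: (nz_imp_lin (c := 1) (c' := 1) _ d1 d2)]; ring.
- by split; [apply: (nz_imp_lin (c := c) (c' := 0) _ e1 e1)|
             apply: (nz_imp_lin (c := c) (c' := 0) _ d1 d1)]; ring.
Qed.

Lemma axes_part_subspace2 (e d : bool) : subspace2 (axes_part e d).
Proof.
split=> [|x y x' y' [e1 d1] [e2 d2]|c x y [e1 d1]]; first by rewrite /axes_part eqxx.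
- by split; [apply: (nz_imp_lin (c := 1) (c' := 1) _ e1 e2)|
             apply: (nz_imp_lin (c := 1) (c' := 1) _ d1 d2)]; ring.
- by split; [apply: (nz_imp_lin (c := c) (c' := 0) _ e1 e1)|
             apply: (nz_imp_lin (c := c) (c' := 0) _ d1 d1)]; ring.
Qed.

Lemma line_subspace2 c : subspace2 (fun x y => x = c * y).
Proof. by split=> [|x y x' y' -> ->|a x y ->]; rewrite ?mulr0 // (mulrDr, mulrCA). Qed.

Lemma swap_part_swap (e d : bool) : swap_stable (swap_part e d).
Proof. by move=> x y [E D]; split; [rewrite addrC | rewrite -oppr_eq0 opprB]. Qed.

Lemma swap_part_surj (e d : bool) x : e || d -> exists y, swap_part e d x y.
Proof.
case: e => /= [_|D]; first by exists x; split=> //; rewrite subrr eqxx.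
by exists (- x); split=> //; rewrite subrr eqxx.
Qed.

Section Subspace2Theory.
Variable L : K -> K -> Prop.
Hypothesis hL : subspace2 L.

Lemma subspace2_lin c c' x y x' y' :
  (c != 0 -> L x y) -> (c' != 0 -> L x' y') -> L (c * x + c' * x') (c * y + c' * y').
Proof.
case: hL => L0 LD LZ; have Lt a u v : (a != 0 -> L u v) -> L (a * u) (a * v).
  by move=> h; have [->|/h/LZ//] := eqVneq a 0; rewrite !mul0r.
by move=> /Lt h /Lt h'; exact: LD.
Qed.

Lemma subspace2_normalize x y : L x y -> x != 0 -> L 1 (y / x).
Proof.
by case: hL => _ _ LZ /(LZ x^-1) + x0; rewrite mulVf // mulrC.
Qed.

Lemma subspace2_full : L 1 0 -> L 0 1 -> full L.
Proof.
move=> L10 L01 x y; have := subspace2_lin (c := x) (c' := y) (fun _ => L10) (fun _ => L01).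
by rewrite !mulr0 !mulr1 addr0 add0r.
Qed.

Lemma subspace2_cases :
  (forall x y, L x y <-> axes_part (L 1 0) (L 0 1) x y) \/
  exists2 c, c != 0 & forall x y, L x y <-> x = c * y.
Proof.
case: (hL) => L0 LD LZ.
have [[x [y [Lxy nLx0]]] | N] := pselect (exists x y, L x y /\ ~ L x 0).
  have x0 : x != 0 by apply: contra_not_neq nLx0 => ->.
  have y0 : y != 0 by apply: contra_not_neq nLx0 => y0; rewrite -y0.
  have Lc1 : L (x / y) 1 by have := LZ y^-1 _ _ Lxy; rewrite mulVf // mulrC.
  right; exists (x / y) => [|a b]; first by rewrite mulf_neq0 ?invr_eq0.
  split=> [Lab|->]; last by have := LZ b _ _ Lc1; rewrite mulr1 mulrC.
  have := LD _ _ _ _ Lab (LZ (- b) _ _ Lc1); rewrite mulr1 addrN mulNr mulrC => Ld.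
  apply/eqP; rewrite -subr_eq0; apply: contraT => d0; exfalso; apply: nLx0.
  by have := LZ (x / (a - x / y * b)) _ _ Ld; rewrite mulr0 divfK.
have Lx x y : L x y -> L x 0 by move=> Lxy; apply: contra_notP N => nL; exists x, y.
left=> x y; split=> [Lxy | [h1 h2]].
  have L0y : L 0 y.
    by have := LD _ _ _ _ Lxy (LZ (-1) _ _ (Lx _ _ Lxy)); rewrite !mulN1r subrr oppr0 addr0.
  split=> nz; first by have := subspace2_normalize (Lx _ _ Lxy) nz; rewrite mul0r.
  by have := LZ y^-1 _ _ L0y; rewrite mulr0 mulVf.
have := subspace2_lin (x := 1) (y := 0) (x' := 0) (y' := 1) h1 h2.
by rewrite !mulr1 !mulr0 addr0 add0r.
Qed.

Hypothesis two_nz : (2%:R : K) != 0.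
Hypothesis swL : swap_stable L.

Lemma swap_subspaceE x y : L x y <-> swap_part (L 1 1) (L 1 (-1)) x y.
Proof.
case: hL => _ LD LZ; split.
- move=> Lxy; have Lyx := swL Lxy; split=> nz.
  + by have := subspace2_normalize (LD _ _ _ _ Lxy Lyx) nz; rewrite addrC mulfV.
  + have := LD _ _ _ _ Lxy (LZ (-1) _ _ Lyx); rewrite !mulN1r.
    by move=> /subspace2_normalize /(_ nz); rewrite -opprB mulNr mulfV.
- case=> E1 E2.
  have half_nz (z : K) : z / 2%:R != 0 -> z != 0 by apply: contra_neq => ->; rewrite mul0r.
  have := subspace2_lin (x := 1) (y := 1) (x' := 1) (y' := -1)
    (fun h => E1 (half_nz _ h)) (fun h => E2 (half_nz _ h)).
  have ex : (x + y) / 2%:R * 1 + (x - y) / 2%:R * 1 = x by field.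
  have ey : (x + y) / 2%:R * 1 + (x - y) / 2%:R * -1 = y by field.
  by rewrite ex ey.
Qed.

Lemma swap_subspace_nz x y : L x y -> x != 0 -> L 1 1 \/ L 1 (-1).
Proof.
move=> /swap_subspaceE [E1 E2] x0.
have : (x + y) + (x - y) != 0 by rewrite addrACA subrr addr0 -mulr2n -mulr_natl mulf_neq0.
by have [->|/E1] := eqVneq (x + y) 0; [rewrite add0r => /E2; right | left].
Qed.

End Subspace2Theory.
End PlanarSubspaces.

(* An element of O q / O q t(t-1): [a_i] and [b_i] are the values at t = 0 and t = 1 of
   its i-th coordinate divided by q. *)
Record fib (K : fieldType) := Fib { a0 : K; a1 : K; a2 : K; b0 : K; b1 : K; b2 : K }.

Ltac fib_ring := congr Fib; rewrite /=; ring.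

Section Fibre.
Variable K : fieldType.
Implicit Types (L LA LB LC : K -> K -> Prop) (c x y : K).
Local Notation fib := (fib K).
Implicit Types (u v w : fib) (P : fib -> Prop).

Definition fzero : fib := Fib 0 0 0 0 0 0.
Definition fadd u v :=
  Fib (a0 u + a0 v) (a1 u + a1 v) (a2 u + a2 v) (b0 u + b0 v) (b1 u + b1 v) (b2 u + b2 v).
Definition fscale c u :=
  Fib (c * a0 u) (c * a1 u) (c * a2 u) (c * b0 u) (c * b1 u) (c * b2 u).
(* The bracket of O specialised at t = 0 and at t = 1. *)
Definition fad w u :=
  Fib (a2 w * a1 u - a1 w * a2 u) 0 (a0 w * a1 u - a1 w * a0 u)
      (b2 w * b1 u - b1 w * b2 u) (b2 w * b0 u - b0 w * b2 u) 0.

Definition subspace P :=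
  [/\ P fzero, forall u v, P u -> P v -> P (fadd u v) & forall c u, P u -> P (fscale c u)].

Definition admissible P :=
  [/\ subspace P, forall w u, P u -> P (fad w u) &
      forall x y, exists u, [/\ P u, a0 u = x & b0 u = y]].

Definition slices LA LB LC u := [/\ LA (a0 u) (a2 u), LB (b0 u) (b1 u) & LC (a1 u) (b2 u)].

Definition slice_data LA LB LC :=
  [/\ subspace2 LA /\ swap_stable LA, subspace2 LB /\ swap_stable LB, subspace2 LC,
      forall x y, LC x y -> (x != 0 -> full LA) /\ (y != 0 -> full LB) &
      forall x, (exists y, LA x y) /\ (exists y, LB x y)].

Lemma slices_subspace LA LB LC :
  subspace2 LA -> subspace2 LB -> subspace2 LC -> subspace (slices LA LB LC).
Proof.
move=> [A0 AD AZ] [B0 BD BZ] [C0 CD CZ]; split; first by split.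
- by move=> u v [? ? ?] [? ? ?]; split; [apply: AD | apply: BD | apply: CD].
- by move=> c u [? ? ?]; split; [apply: AZ | apply: BZ | apply: CZ].
Qed.

Lemma slices_admissible LA LB LC : slice_data LA LB LC -> admissible (slices LA LB LC).
Proof.
case=> [[sA swA] [sB swB] sC force surj].
split; first exact: slices_subspace.
- move=> w u [Au Bu Cu]; have [fA fB] := force _ _ Cu.
  have [[_ _ AZ] [_ _ BZ]] := (sA, sB); split=> /=; last by case: sC.
  + have [a10|/fA//] := eqVneq (a1 u) 0.
    by rewrite a10 !mulr0 !sub0r -!mulNr; apply/AZ/swA.
  + have [b20|/fB//] := eqVneq (b2 u) 0.
    by rewrite b20 !mulr0 !subr0; apply/BZ/swB.
- move=> x y; have [[x' Ax] _] := surj x; have [_ [y' By]] := surj y.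
  by exists (Fib x 0 x' y y' 0); split=> //; split=> //; case: sC.
Qed.

Section AdmissibleSlices.
Variable P : fib -> Prop.
Hypothesis hP : admissible P.

Let PA x y := P (Fib x 0 y 0 0 0).
Let PB x y := P (Fib 0 0 0 x y 0).
Let PC x y := P (Fib 0 x 0 0 0 y).

Let P0 : P fzero. Proof. by have [[]] := hP. Qed.
Let PD u v : P u -> P v -> P (fadd u v). Proof. by have [[_ + _] _ _] := hP; apply. Qed.
Let PZ c u : P u -> P (fscale c u). Proof. by have [[_ _ +] _ _] := hP; apply. Qed.
Let Pad w u : P u -> P (fad w u). Proof. by have [_ + _] := hP; apply. Qed.

Lemma admissible_slices : P = slices PA PB PC.
Proof.
have fibE u : u = fadd (Fib (a0 u) 0 (a2 u) 0 0 0)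
                        (fadd (Fib 0 0 0 (b0 u) (b1 u) 0) (Fib 0 (a1 u) 0 0 0 (b2 u))).
  by case: u => *; fib_ring.
rewrite predeqE => u; split=> [Pu | [Au Bu Cu]]; last first.
  by rewrite [u]fibE; apply: PD => //; apply: PD.
have Au : PA (a0 u) (a2 u).
  rewrite /PA (_ : Fib _ _ _ _ _ _ = fad (Fib 0 1 0 0 0 0) (fad (Fib 0 1 0 0 0 0) u)).
    by do 2 apply: Pad.
  by fib_ring.
have Bu : PB (b0 u) (b1 u).
  rewrite /PB (_ : Fib _ _ _ _ _ _ = fad (Fib 0 0 0 0 0 1) (fad (Fib 0 0 0 0 0 1) u)).
    by do 2 apply: Pad.
  by fib_ring.
split=> //; rewrite /PC (_ : Fib _ _ _ _ _ _ = fadd u (fscale (-1) (fadd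
   (Fib (a0 u) 0 (a2 u) 0 0 0) (Fib 0 0 0 (b0 u) (b1 u) 0)))).
  by apply: PD => //; apply/PZ/PD.
by case: u {Pu Au Bu fibE} => *; fib_ring.
Qed.

Let slice_subspace2 (f : K -> K -> fib) : f 0 0 = fzero ->
  (forall x y x' y', f (x + x') (y + y') = fadd (f x y) (f x' y')) ->
  (forall c x y, f (c * x) (c * y) = fscale c (f x y)) -> subspace2 (fun x y => P (f x y)).
Proof.
by move=> f0 fD fZ; split=> [|x y x' y' h h'|c x y h]; rewrite ?f0 ?fD ?fZ; [|exact: PD|exact: PZ].
Qed.

Lemma admissible_slice_data : slice_data PA PB PC.
Proof.
have sA : subspace2 PA by apply: slice_subspace2 => *; fib_ring.
have sB : subspace2 PB by apply: slice_subspace2 => *; fib_ring.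
have swA : swap_stable PA.
  move=> x y /(Pad (Fib 0 1 0 0 0 0)) /(PZ (-1)).
  by rewrite /PA (_ : fscale _ _ = Fib y 0 x 0 0 0) //; fib_ring.
have swB : swap_stable PB.
  move=> x y /(Pad (Fib 0 0 0 0 0 1)).
  by rewrite /PB (_ : fad _ _ = Fib 0 0 0 y x 0) //; fib_ring.
split=> //; first by apply: slice_subspace2 => *; fib_ring.
  move=> x y Cxy; split=> nz.
    have Ax0 : PA x 0.
      have := Pad (Fib 0 0 1 0 0 0) Cxy.
      by rewrite /PA (_ : fad _ _ = Fib x 0 0 0 0 0) //; fib_ring.
    have := subspace2_normalize sA Ax0 nz; rewrite mul0r => A10.
    exact: subspace2_full (swA _ _ A10).
  have By0 : PB (- y) 0.
    have := Pad (Fib 0 0 0 0 1 0) Cxy.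
    by rewrite /PB (_ : fad _ _ = Fib 0 0 0 (- y) 0 0) //; fib_ring.
  have := subspace2_normalize sB By0; rewrite oppr_eq0 mul0r => /(_ nz) B10.
  exact: subspace2_full (swB _ _ B10).
move=> x; have [_ _ surj] := hP.
have [u [Pu ux _]] := surj x 0; have [v [Pv _ vx]] := surj 0 x.
rewrite admissible_slices in Pu Pv; have [[Au _ _] [_ Bv _]] := (Pu, Pv).
by split; [exists (a2 u); rewrite -ux | exists (b1 v); rewrite -vx].
Qed.

End AdmissibleSlices.
Lemma admissibleP P :
  admissible P <-> exists LA LB LC, slice_data LA LB LC /\ P = slices LA LB LC.
Proof.
split=> [hP | [LA [LB [LC [data ->]]]]]; last exact: slices_admissible.
by do 3 eexists; split; [exact: admissible_slice_data hP | exact: admissible_slices hP].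
Qed.

Definition fibI (e d g e' d' g' : bool) :=
  slices (swap_part e' d') (swap_part e d) (axes_part [&& e', d' & g'] [&& e, d & g]).

Definition fibII eta := slices (fun _ _ => True) (fun _ _ => True) (fun x y => x = - eta * y).

Lemma fibI_data (e d g e' d' g' : bool) : e || d -> e' || d' ->
  slice_data (swap_part e' d') (swap_part e d) (axes_part [&& e', d' & g'] [&& e, d & g]).
Proof.
move=> ed ed'; split; [split | split | | |].
- exact: swap_part_subspace2.
- exact: swap_part_swap.
- exact: swap_part_subspace2.
- exact: swap_part_swap.
- exact: axes_part_subspace2.
- by move=> x y [hA hB]; split=> [/hA | /hB] /and3P[-> -> _].
- by move=> x; split; apply: swap_part_surj.
Qed.

Lemma fibII_data eta :
  slice_data (fun _ _ => True) (fun _ _ => True) (fun x y => x = - eta * y).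
Proof. by split; [split | split | exact: line_subspace2 | |]. Qed.

Lemma slice_data_cases LA LB LC : (2%:R : K) != 0 -> slice_data LA LB LC ->
  (exists e d g e' d' g' : bool,
     [/\ e || d, e' || d' & slices LA LB LC = fibI e d g e' d' g']) \/
  exists2 eta, eta != 0 & slices LA LB LC = fibII eta.
Proof.
move=> two [[sA swA] [sB swB] sC force surj].
have EA := swap_subspaceE sA two swA; have EB := swap_subspaceE sB two swB.
have [[y Ay] [y' By]] := surj 1.
have [A1 B1] := (swap_subspace_nz sA two swA Ay (oner_neq0 _),
                 swap_subspace_nz sB two swB By (oner_neq0 _)).
case: (subspace2_cases sC) => [EC | [c c0 EC]].
- left; exists `[<LB 1 1>], `[<LB 1 (-1)>], `[<LC 0 1>], `[<LA 1 1>], `[<LA 1 (-1)>], `[<LC 1 0>].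
  have gA : [&& `[<LA 1 1>], `[<LA 1 (-1)>] & `[<LC 1 0>]] = `[<LC 1 0>].
    case: (asboolP (LC 1 0)) => [/force[/(_ (oner_neq0 _)) fA _] | _]; last by rewrite !andbF.
    by rewrite !andbT; apply/andP; split; apply/asboolP; apply: fA.
  have gB : [&& `[<LB 1 1>], `[<LB 1 (-1)>] & `[<LC 0 1>]] = `[<LC 0 1>].
    case: (asboolP (LC 0 1)) => [/force[_ /(_ (oner_neq0 _)) fB] | _]; last by rewrite !andbF.
    by rewrite !andbT; apply/andP; split; apply/asboolP; apply: fB.
  split; [by rewrite -asbool_or; apply/asboolP | by rewrite -asbool_or; apply/asboolP |].
  rewrite /fibI gA gB; congr slices; apply/funext => x; rewrite predeqE => z; rewrite !asboolE.
  + exact: EA.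
  + exact: EB.
  + exact: EC.
- right; exists (- c); first by rewrite oppr_eq0.
  have [/(_ c0) fA /(_ (oner_neq0 _)) fB] := force c 1 (iffRL (EC c 1) (esym (mulr1 c))).
  rewrite /fibII opprK; congr slices; apply/funext => x; rewrite predeqE => z.
  + by split=> // _; apply: fA.
  + by split=> // _; apply: fB.
  + exact: EC.
Qed.

End Fibre.

Arguments fzero {K}.

Section FibreSpans.
Variable K : fieldType.
Implicit Types (c : K) (u v : fib K) (l : seq (fib K)) (P : fib K -> Prop).

Fixpoint spanF l u : Prop :=
  if l is v :: l' then exists c y, spanF l' y /\ u = fadd (fscale c v) y else u = fzero.

Lemma spanF_sub P l : subspace P -> (forall i, P (nth fzero l i)) -> forall u, spanF l u -> P u.
Proof.
case=> P0 PD PZ; elim: l => [|v l IH] Pl u /=; first by move->.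
by case=> c [y [ly ->]]; apply: PD; [exact: PZ (Pl 0) | exact: IH (fun i => Pl i.+1) _ ly].
Qed.

Lemma fscale_bK c (b : bool) v : (c != 0 -> b) -> fscale c (fscale (bK K b) v) = fscale c v.
Proof.
case: b => [_|]; first by rewrite /bK; fib_ring.
by move=> /contraT/eqP->; fib_ring.
Qed.

Lemma subspace_fscale_bK P (b : bool) v : subspace P -> (b -> P v) -> P (fscale (bK K b) v).
Proof.
case=> P0 _ PZ; case: b => [/(_ isT)/(PZ 1)|_]; first by rewrite /bK /= mulr1n.
by rewrite /bK (_ : fscale _ v = fzero) //; fib_ring.
Qed.

(* The generators of types (i) and (ii): [w_i t] has [b_i = 1], [w_i (t-1)] has [a_i = -1]. *)
Definition genI (e d g e' d' g' : bool) : seq (fib K) :=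
  [:: fscale (bK K e) (Fib 0 0 0 1 1 0); fscale (bK K d) (Fib 0 0 0 1 (-1) 0);
      fscale (bK K [&& e, d & g]) (Fib 0 0 0 0 0 1); fscale (bK K e') (Fib (-1) 0 (-1) 0 0 0);
      fscale (bK K d') (Fib (-1) 0 1 0 0 0); fscale (bK K [&& e', d' & g']) (Fib 0 (-1) 0 0 0 0)].

Definition genII (eta : K) : seq (fib K) :=
  [:: Fib 0 0 0 1 0 0; Fib 0 0 0 0 1 0; Fib (-1) 0 0 0 0 0; Fib 0 0 (-1) 0 0 0;
      Fib 0 (- eta) 0 0 0 1].

Lemma spanF_genI (e d g e' d' g' : bool) : (2%:R : K) != 0 ->
  spanF (genI e d g e' d' g') = fibI e d g e' d' g'.
Proof.
move=> two; rewrite predeqE => -[x0 x1 x2 y0 y1 y2]; split; last first.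
  case=> -[A1 A2] [B1 B2] [C1 C2] /=.
  have nz c z (b : bool) : (z != 0 -> b) -> c * z != 0 -> b.
    by move=> h; apply: (nz_imp_lin (c := c) (c' := 0) _ h h); ring.
  have -> : Fib x0 x1 x2 y0 y1 y2 =
    fadd (fscale (2%:R^-1 * (y0 + y1)) (Fib 0 0 0 1 1 0))
   (fadd (fscale (2%:R^-1 * (y0 - y1)) (Fib 0 0 0 1 (-1) 0))
   (fadd (fscale y2 (Fib 0 0 0 0 0 1))
   (fadd (fscale (- 2%:R^-1 * (x0 + x2)) (Fib (-1) 0 (-1) 0 0 0))
   (fadd (fscale (- 2%:R^-1 * (x0 - x2)) (Fib (-1) 0 1 0 0 0))
   (fadd (fscale (-1 * x1) (Fib 0 (-1) 0 0 0 0)) fzero))))).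
    by congr Fib; rewrite /=; field.
  rewrite -(fscale_bK _ (nz _ _ _ B1)) -(fscale_bK _ (nz _ _ _ B2)) -(fscale_bK _ C2).
  rewrite -(fscale_bK _ (nz _ _ _ A1)) -(fscale_bK _ (nz _ _ _ A2)) -(fscale_bK _ (nz _ _ _ C1)).
  by do 6 (do 2 eexists; split; last reflexivity).
have sI : subspace (fibI (K := K) e d g e' d' g').
  by apply: slices_subspace; [exact: swap_part_subspace2 | exact: swap_part_subspace2 |
                              exact: axes_part_subspace2].
apply: spanF_sub => // -[|[|[|[|[|[|i]]]]]]; last by rewrite nth_default //; case: sI.
all: apply: (subspace_fscale_bK sI) => hb.
all: by split; split; rewrite /= ?addr0 ?subr0 ?addNr ?subrr ?eqxx.
Qed.

Lemma spanF_genII eta : spanF (genII eta) = fibII eta.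
Proof.
rewrite predeqE => u; split.
  have [sII _ _] := slices_admissible (fibII_data eta).
  apply: spanF_sub => //.
  by case=> [|[|[|[|[|i]]]]]; split=> //=; rewrite ?nth_nil ?mulr0 ?mulr1.
case: u => x0 x1 x2 y0 y1 y2 [_ _ /= ->].
have -> : Fib x0 (- eta * y2) x2 y0 y1 y2 =
    fadd (fscale y0 (Fib 0 0 0 1 0 0))
   (fadd (fscale y1 (Fib 0 0 0 0 1 0))
   (fadd (fscale (- x0) (Fib (-1) 0 0 0 0 0))
   (fadd (fscale (- x2) (Fib 0 0 (-1) 0 0 0))
   (fadd (fscale y2 (Fib 0 (- eta) 0 0 0 1)) fzero)))).
  by fib_ring.
by do 5 (do 2 eexists; split; last reflexivity).
Qed.

End FibreSpans.

Arguments genI {K}.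

Section Lift.
Variable K : fieldType.
Implicit Types (a b : K) (f : {poly K}) (u : fib K) (x y r : Oelt K) (P : fib K -> Prop).

Definition interp a b : {poly K} := b%:P * 'X - a%:P * ('X - 1).

Definition interpO u : Oelt K :=
  mkO (interp (a0 u) (b0 u)) (interp (a1 u) (b1 u)) (interp (a2 u) (b2 u)).

Definition ev01 y : fib K :=
  Fib (c0 y).[0] (c1 y).[0] (c2 y).[0] (c0 y).[1] (c1 y).[1] (c2 y).[1].

Ltac O_ring := rewrite /subO /addO /scaleO /pmulO /brO /zeroO /=;
  congr mkO; rewrite ?polyCD ?polyCM ?polyCN ?polyC1 ?polyC0; ring.

Lemma interp0 a b : (interp a b).[0] = a.
Proof. by rewrite /interp !hornerE; ring. Qed.

Lemma interp1 a b : (interp a b).[1] = b.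
Proof. by rewrite /interp !hornerE; ring. Qed.

Lemma dvdp_Xl f : ('X %| f) = root f 0.
Proof. by rewrite -dvdp_XsubCl polyC0 subr0. Qed.

Lemma dvdp_Xsub1l f : ('X - 1 %| f) = root f 1.
Proof. by rewrite -dvdp_XsubCl polyC1. Qed.

Lemma coprimep_X_Xsub1 : @coprimep K 'X ('X - 1).
Proof. by rewrite -[X in coprimep X _]subr0 -polyC0 -polyC1 coprimep_XsubC2 // subr0 oner_eq0. Qed.

Lemma dvdp_sub_interp f : 'X * ('X - 1) %| f - interp f.[0] f.[1].
Proof.
rewrite Gauss_dvdp ?coprimep_X_Xsub1 // dvdp_Xl dvdp_Xsub1l /root !hornerD !hornerN.
by rewrite interp0 interp1 !subrr eqxx.
Qed.

Lemma ev01_interpO u : ev01 (interpO u) = u.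
Proof. by case: u => *; rewrite /ev01 /= !interp0 !interp1. Qed.

Lemma ev01_br x y : ev01 (brO x y) = fad (ev01 x) (ev01 y).
Proof. by rewrite /ev01 /fad /=; congr Fib; rewrite !hornerE; ring. Qed.

Variable q : {poly K}.
Hypothesis q_neq0 : q != 0.

Definition lift u := pmulO q (interpO u).

Definition lift_image P x := exists2 u, P u & x = lift u.

Definition ideal_of P x := exists r u, [/\ OJtt1 q r, P u & x = addO r (lift u)].

Lemma lift_add u v : lift (fadd u v) = addO (lift u) (lift v).
Proof. by rewrite /lift /interpO /interp; O_ring. Qed.

Lemma lift_scale c u : lift (fscale c u) = scaleO c (lift u).
Proof. by rewrite /lift /interpO /interp; O_ring. Qed.

Lemma lift0 : lift fzero = zeroO K.
Proof. by rewrite /lift /interpO /interp; O_ring. Qed.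

Lemma OJtt1_add x y : OJtt1 q x -> OJtt1 q y -> OJtt1 q (addO x y).
Proof. by move=> [? ? ?] [? ? ?]; split; apply: dvdp_add. Qed.

Lemma OJtt1_scale c x : OJtt1 q x -> OJtt1 q (scaleO c x).
Proof. by move=> [? ? ?]; split; apply: dvdp_mull. Qed.

Lemma OJtt1_zero : OJtt1 q (zeroO K).
Proof. by split; apply: dvdp0. Qed.

Lemma OJtt1_br x y : OJtt1 q y -> OJtt1 q (brO x y).
Proof.
by case=> *; split; rewrite ?dvdpNr ?dvdp_mull // dvdp_sub // dvdp_mull.
Qed.

Lemma OJtt1_lift u : OJtt1 q (lift u) -> u = fzero.
Proof.
have vanish a b : q * ('X * ('X - 1)) %| q * interp a b -> a = 0 /\ b = 0.
  rewrite dvdp_mul2l // Gauss_dvdp ?coprimep_X_Xsub1 // dvdp_Xl dvdp_Xsub1l /root.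
  by rewrite interp0 interp1 => /andP[/eqP -> /eqP ->].
by case: u => ? ? ? ? ? ? [/vanish[/= -> ->] /vanish[/= -> ->] /vanish[/= -> ->]].
Qed.

Lemma pmulO_split y : exists2 r, OJtt1 q r & pmulO q y = addO r (lift (ev01 y)).
Proof.
exists (subO (pmulO q y) (lift (ev01 y))); last by O_ring.
have dv f : q * ('X * ('X - 1)) %| q * f + (-1)%:P * (q * interp f.[0] f.[1]).
  by rewrite polyCN polyC1 mulN1r -mulrBr dvdp_mul2l // dvdp_sub_interp.
by split; apply: dv.
Qed.

Lemma br_lift x u : exists2 r, OJtt1 q r & brO x (lift u) = addO r (lift (fad (ev01 x) u)).
Proof.
have [r Jr e] := pmulO_split (brO x (interpO u)); exists r => //.
by rewrite -[X in fad _ X]ev01_interpO -ev01_br -e /lift; O_ring.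
Qed.

Section IdealOfAdmissible.
Variable P : fib K -> Prop.
Hypothesis hP : admissible P.

Lemma ideal_of_is_ideal : is_ideal (ideal_of P).
Proof.
have [[P0 PD PZ] Pad _] := hP; split.
- by exists (zeroO K), fzero; rewrite lift0; split; [exact: OJtt1_zero | exact: P0 | O_ring].
- move=> _ _ [r [u [Jr Pu ->]]] [r' [u' [Jr' Pu' ->]]].
  exists (addO r r'), (fadd u u'); split; [exact: OJtt1_add | exact: PD |].
  by rewrite lift_add; O_ring.
- move=> c _ [r [u [Jr Pu ->]]].
  exists (scaleO c r), (fscale c u); split; [exact: OJtt1_scale | exact: PZ |].
  by rewrite lift_scale; O_ring.
- move=> x _ [r [u [Jr Pu ->]]]; have [r' Jr' e] := br_lift x u.
  exists (addO (brO x r) r'), (fad (ev01 x) u).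
  split; [exact: OJtt1_add (OJtt1_br _ Jr) Jr' | exact: Pad |].
  have -> : brO x (addO r (lift u)) = addO (brO x r) (brO x (lift u)) by O_ring.
  by rewrite e; O_ring.
Qed.

Lemma J_of_ideal_of p : J_of (ideal_of P) p <-> q %| p.
Proof.
split=> [[p1 [p2 [r [u [[Jr _ _] _ e]]]]] | /dvdpP [h ->]].
  have -> : p = c0 r + q * interp (a0 u) (b0 u) by rewrite -[p]/(c0 (mkO p p1 p2)) e.
  by rewrite dvdp_add ?dvdp_mulr // (dvdp_trans _ Jr) ?dvdp_mulr.
have [_ _ surj] := hP; have [u [Pu u0 u1]] := surj h.[0] h.[1].
exists (c1 (lift u)), (c2 (lift u)), (mkO (h * q - c0 (lift u)) 0 0), u.
split=> //; last by O_ring.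
split; rewrite /= ?dvdp0 // u0 u1.
have -> : h * q - q * interp h.[0] h.[1] = q * (h - interp h.[0] h.[1]) by ring.
by rewrite dvdp_mul2l // dvdp_sub_interp.
Qed.

End IdealOfAdmissible.

Section AdmissibleOfIdeal.
Variable I : Oelt K -> Prop.
Hypothesis hI : is_ideal I.
Hypothesis hJ : forall p, J_of I p <-> q %| p.

Let ID x y : I x -> I y -> I (addO x y). Proof. by have [_ + _ _] := hI; apply. Qed.
Let IZ c x : I x -> I (scaleO c x). Proof. by have [_ _ + _] := hI; apply. Qed.
Let Ibr x y : I y -> I (brO x y). Proof. by have [_ _ _ +] := hI; apply. Qed.

Let I_cancel r x : I (addO r x) -> I r -> I x.
Proof.
move=> Irx Ir; have -> : x = addO (addO r x) (scaleO (-1) r) by case: x {Irx} => *; O_ring.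
exact/ID/IZ.
Qed.

Lemma ideal_dvdp_c0 x : I x -> q %| c0 x.
Proof. by case: x => x0 x1 x2 Ix; apply/hJ; exists x1, x2. Qed.

Lemma ideal_pmulO x : I x -> exists y, x = pmulO q y.
Proof.
move=> Ix; have /dvdpP[y0 e0] := ideal_dvdp_c0 Ix.
have /dvdpP[y1 e1] : q %| c1 x.
  by have := ideal_dvdp_c0 (Ibr (v2 K) Ix); rewrite /= mul0r mul1r sub0r opprK.
have /dvdpP[y2 e2] : q %| c2 x.
  by have := ideal_dvdp_c0 (Ibr (v1 K) Ix); rewrite /= mul0r mul1r subr0 dvdpNr.
by exists (mkO y0 y1 y2); case: x {Ix} e0 e1 e2 => /= ? ? ? -> -> ->; O_ring.
Qed.

Lemma OJtt1_sub_ideal x : OJtt1 q x -> I x.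
Proof.
have [p1 [p2 Iq]] : J_of I q by apply/hJ.
set m := q * ('X * ('X - 1)).
have I2 h : I (mkO 0 0 (h * m)).
  have -> : mkO 0 0 (h * m) = brO (mkO (- h) 0 0) (brO (v2 K) (mkO q p1 p2)) by rewrite /m; O_ring.
  exact/Ibr/Ibr.
have I1 h : I (mkO 0 (h * m) 0).
  have -> : mkO 0 (h * m) 0 = brO (mkO (- h) 0 0) (brO (v1 K) (mkO q p1 p2)) by rewrite /m; O_ring.
  exact/Ibr/Ibr.
have I0 h : I (mkO (h * m) 0 0).
  have -> : mkO (h * m) 0 0 = brO (mkO 0 (-1) 0) (mkO 0 0 (h * m)) by O_ring.
  exact/Ibr.
case=> /dvdpP[h0 e0] /dvdpP[h1 e1] /dvdpP[h2 e2].
have -> : x = addO (mkO (h0 * m) 0 0) (addO (mkO 0 (h1 * m) 0) (mkO 0 0 (h2 * m))).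
  by case: x e0 e1 e2 => /= ? ? ? -> -> ->; rewrite /m; O_ring.
exact/ID/ID.
Qed.

Lemma ideal_ofE : I = ideal_of (fun u => I (lift u)).
Proof.
rewrite predeqE => x; split=> [Ix | [r [u [Jr Iu ->]]]]; last exact: ID (OJtt1_sub_ideal Jr) Iu.
have [y exy] := ideal_pmulO Ix; rewrite exy in Ix *; have [r Jr e] := pmulO_split y.
exists r, (ev01 y); split=> //.
by apply: (I_cancel (r := r)); [rewrite -e | exact: OJtt1_sub_ideal].
Qed.

Lemma admissible_ideal : admissible (fun u => I (lift u)).
Proof.
split; first split.
- by rewrite lift0; have [] := hI.
- by move=> u v Iu Iv; rewrite lift_add; exact: ID.
- by move=> c u Iu; rewrite lift_scale; exact: IZ.
- move=> w u Iu; have [r Jr e] := br_lift (interpO w) u.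
  rewrite ev01_interpO in e.
  by apply: (I_cancel (r := r)); [rewrite -e; exact: Ibr | exact: OJtt1_sub_ideal].
- move=> x y; have [p1 [p2 Ixy]] : J_of I (q * interp x y) by apply/hJ; exact: dvdp_mulr.
  have [z ez] := ideal_pmulO Ixy; have [r Jr e] := pmulO_split z.
  have cz : interp x y = c0 z by case: ez => /(mulfI q_neq0).
  exists (ev01 z); split; [| by rewrite /= -cz interp0 | by rewrite /= -cz interp1].
  by apply: (I_cancel (r := r)); [rewrite -e -ez | exact: OJtt1_sub_ideal].
Qed.

End AdmissibleOfIdeal.

Lemma idealJ_admissibleP I :
  is_ideal I /\ (forall p, J_of I p <-> q %| p) <-> exists2 P, admissible P & I = ideal_of P.
Proof.
split=> [[hI hJ] | [P hP ->]]; last by split; [exact: ideal_of_is_ideal | exact: J_of_ideal_of].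
by exists (fun u => I (lift u)); [exact: admissible_ideal | exact: ideal_ofE].
Qed.

Lemma direct_sum_lift P I : direct_sum_eq (OJtt1 q) (lift_image P) I <-> I = ideal_of P.
Proof.
have sumE x : (exists r y, OJtt1 q r /\ lift_image P y /\ x = addO r y) <-> ideal_of P x.
  split=> [[r [_ [Jr [[u Pu ->] ->]]]] | [r [u [Jr Pu ->]]]]; first by exists r, u.
  by exists r, (lift u); split; last split; [| exists u |].
rewrite predeqE /direct_sum_eq; split=> [[DI _] x | DI].
  exact: iff_trans (DI x) (sumE x).
split=> [x | x Jx [u _ xu]]; first exact: iff_trans (DI x) (iff_sym (sumE x)).
by rewrite xu in Jx *; rewrite (OJtt1_lift Jx) lift0.
Qed.

Lemma spanO_lift l : spanO (map lift l) = lift_image (spanF l).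
Proof.
rewrite predeqE; elim: l => [|v l IH] x /=.
  by split=> [-> | [u -> ->]]; [exists fzero; rewrite ?lift0 | rewrite lift0].
split=> [[c [y [/IH [u lu ->] ->]]] | [_ [c [u [lu ->]]] ->]].
  by exists (fadd (fscale c v) u); [exists c, u | rewrite lift_add lift_scale].
by exists c, (lift u); split; [apply/IH; exists u | rewrite lift_add lift_scale].
Qed.

Lemma map_lift_genI (e d g e' d' g' : bool) :
  map lift (genI e d g e' d' g') =
  [:: scaleO (bK K e) (addO (pmulO 'X (pmulO q (v0 K))) (pmulO 'X (pmulO q (v1 K))));
      scaleO (bK K d) (subO (pmulO 'X (pmulO q (v0 K))) (pmulO 'X (pmulO q (v1 K))));
      scaleO (bK K [&& e, d & g]) (pmulO 'X (pmulO q (v2 K)));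
      scaleO (bK K e') (addO (pmulO ('X - 1) (pmulO q (v0 K))) (pmulO ('X - 1) (pmulO q (v2 K))));
      scaleO (bK K d') (subO (pmulO ('X - 1) (pmulO q (v0 K))) (pmulO ('X - 1) (pmulO q (v2 K))));
      scaleO (bK K [&& e', d' & g']) (pmulO ('X - 1) (pmulO q (v1 K)))].
Proof.
rewrite /= !lift_scale.
congr [:: scaleO _ _; scaleO _ _; scaleO _ _; scaleO _ _; scaleO _ _; scaleO _ _];
  by rewrite /lift /interpO /interp; O_ring.
Qed.

Lemma map_lift_genII eta :
  map lift (genII eta) =
  [:: pmulO 'X (pmulO q (v0 K)); pmulO 'X (pmulO q (v1 K));
      pmulO ('X - 1) (pmulO q (v0 K)); pmulO ('X - 1) (pmulO q (v2 K));
      addO (pmulO 'X (pmulO q (v2 K))) (scaleO eta (pmulO ('X - 1) (pmulO q (v1 K))))].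
Proof. by rewrite /=; congr [:: _; _; _; _; _]; rewrite /lift /interpO /interp; O_ring. Qed.

Lemma typeI_lift S : typeI q S <-> exists e d g e' d' g' : bool,
  [/\ e || d, e' || d' & S = lift_image (spanF (genI e d g e' d' g'))].
Proof.
split=> -[e [d [g [e' [d' [g' [ed ed' SE]]]]]]]; exists e, d, g, e', d', g'; split=> //.
  by rewrite -spanO_lift map_lift_genI predeqE.
by move=> x; rewrite SE -spanO_lift map_lift_genI.
Qed.

Lemma typeII_lift S : typeII q S <-> exists2 eta, eta != 0 & S = lift_image (spanF (genII eta)).
Proof.
split=> [[eta [eta0 SE]] | [eta eta0 SE]]; exists eta => //.
  by rewrite -spanO_lift map_lift_genII predeqE.
by split=> // x; rewrite SE -spanO_lift map_lift_genII.
Qed.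

Lemma type_lift_imageP S : (2%:R : K) != 0 ->
  typeI q S \/ typeII q S <-> exists2 P, admissible P & S = lift_image P.
Proof.
move=> two; rewrite typeI_lift typeII_lift; split.
  case=> [[e [d [g [e' [d' [g' [ed ed' ->]]]]]]] | [eta _ ->]].
    exists (fibI e d g e' d' g'); last by rewrite spanF_genI.
    by apply: slices_admissible; exact: fibI_data.
  by exists (fibII eta); [apply: slices_admissible; exact: fibII_data | rewrite spanF_genII].
case=> P /admissibleP[LA [LB [LC [data ->]]]] ->.
case: (slice_data_cases two data) => [[e [d [g [e' [d' [g' [ed ed' ->]]]]]]] | [eta eta0 ->]].
  by left; exists e, d, g, e', d', g'; rewrite spanF_genI.
by right; exists eta; rewrite ?spanF_genII.
Qed.

End Lift.

Unset Implicit Arguments.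

Theorem proposition4p8 (K : fieldType) (q : {poly K}) :
  (2%:R : K) != 0 -> q != 0 ->
  forall I : Oelt K -> Prop,
    (is_ideal I /\ (forall p : {poly K}, J_of I p <-> q %| p)) <->
    (exists S : Oelt K -> Prop,
        (typeI q S \/ typeII q S) /\ direct_sum_eq (OJtt1 q) S I).
Proof.
move=> two q0 I; rewrite idealJ_admissibleP //; split.
  case=> P hP ->; exists (lift_image q P); split; last exact/(direct_sum_lift q0).
  by apply/(type_lift_imageP q _ two); exists P.
by case=> S [/(type_lift_imageP q S two) [P hP ->] /(direct_sum_lift q0) ->]; exists P.
Qed.
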